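(* Let $D$ and $D'$ be finite subsets of $[0,1]\times\mathbb{R}$ (the fitting and external datasets) such that the inputs of all samples in $D\cup D'$ are pairwise distinct. Let $\epsilon>0$. Then there exist a subset $A\subseteq D'$ and $a>0$ such that the TNN constructed from the dataset $D\cup A$ (with parameter $a$) satisfies $|y-TNN(x)|<\epsilon$ for every $(x,y)\in D\cup D'$. In particular, all samples of $D$ remain approximated within $\epsilon$ after the model is rebuilt with the added samples of $A$.
   Context: Let $\sigma(t)=1/(1+e^{-t})$. For a finite dataset $\{(x^{(k)},y^{(k)})\}_{k=1}^N\subset[0,1]\times\mathbb{R}$ with pairwise distinct inputs, index it so that $x^{(1)}>x^{(2)}>\dots>x^{(N)}$. Set $\Delta^{(k)}=x^{(k)}-x^{(k+1)}$ for $k<N$ and let $\Delta^{(N)}>0$ be an arbitrary fixed positive number. For $a>0$ put $W_{N-k+1}=2a/\Delta^{(k)}$, $b_{N-k+1}=a-W_{N-k+1}x^{(k)}$, $\alpha_i=y^{(N-i+1)}-y^{(N-i+2)}$ (with $y^{(N+1)}:=0$), and define the TNN constructed from this dataset as $TNN(x)=\sum_{i=1}^N\alpha_i\sigma(W_ix+b_i)$. *)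

From HB Require Import structures.
From mathcomp Require Import all_boot all_order all_algebra.
From mathcomp Require Import all_classical all_reals all_analysis.
Set Implicit Arguments. Unset Strict Implicit. Unset Printing Implicit Defensive.
Import Order.TTheory GRing.Theory Num.Theory.
Local Open Scope ring_scope.

Definition sigmoid {R : realType} (t : R) : R := 1 / (1 + expR (- t)).

(* Sort the dataset so that inputs are strictly decreasing: x^(1) > ... > x^(N)
   (0-indexed here: position k holds x^(k+1)). *)
Definition sort_dec {R : realType} (D : seq (R * R)) : seq (R * R) :=
  sort (fun p q : R * R => q.1 <= p.1) D.

(* TNN built from dataset D, with parameter a and the fixed positive
   Delta^(N) = dN.  With S the sorted dataset (0-indexed k = paper's k+1):
     Delta_k = x_k - x_{k+1}   (k < N-1),   Delta_{N-1} = dN,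
     W = 2a/Delta_k,  b = a - W x_k,  alpha = y_k - y_{k+1} (y_N := 0).
   The paper's index i = N-k+1 is only a relabelling of the summands. *)
Definition TNN {R : realType} (dN a : R) (D : seq (R * R)) (x : R) : R :=
  let S := sort_dec D in
  let N := size S in
  let xs k := (nth (0, 0) S k).1 in
  let ys k := (nth (0, 0) S k).2 in
  \sum_(k < N)
    let Delta := if (k.+1 < N)%N then xs k - xs k.+1 else dN in
    let W := 2 * a / Delta in
    let b := a - W * xs k in
    let alpha := ys k - (if (k.+1 < N)%N then ys k.+1 else 0) in
    alpha * sigmoid (W * x + b).

(* With inputs sorted decreasingly as x_0 > ... > x_{N-1}, the TNN is
   sum_k alpha_k sigma(t_k(x)) where t_k(x) = a + (2a/Delta_k)(x - x_k).
   At a data point x_j, the pre-activation t_k(x_j) is >= a when k >= j and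
   <= -a when k < j (then x_j - x_k <= -Delta_k), so every sigmoid is within
   exp(-a) of the step [k >= j]; the step values telescope to
   sum_(k >= j) alpha_k = y_j.  Hence the error at every sample is at most
   (sum_k |alpha_k|) exp(-a), which is below eps once a is large.  Taking
   A = D' makes every sample of D ++ D' a node of the network. *)
From HB Require Import structures.
From mathcomp Require Import all_boot all_order all_algebra.
From mathcomp Require Import all_classical all_reals all_analysis.
From mathcomp Require Import lra.
Import Order.TTheory GRing.Theory Num.Theory.
Local Open Scope ring_scope.
Set Implicit Arguments. Unset Strict Implicit.

Section Sigmoid.
Variable R : realType.

Lemma sigmoid_gt0 (t : R) : 0 < sigmoid t.
Proof. by rewrite /sigmoid mul1r invr_gt0 addr_gt0 ?expR_gt0. Qed.

Lemma sigmoidK (t : R) : sigmoid t * (1 + expR (- t)) = 1.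
Proof.
by rewrite /sigmoid mul1r mulVf // gt_eqF // addr_gt0 ?expR_gt0.
Qed.

Lemma dist_sigmoid1_le (a t : R) : a <= t -> `|1 - sigmoid t| <= expR (- a).
Proof.
move=> le_at; have s_gt0 := sigmoid_gt0 t; have sK := sigmoidK t.
have e_gt0 := expR_gt0 (- t).
have le_e : expR (- t) <= expR (- a) by rewrite ler_expR lerN2.
rewrite ger0_norm; nra.
Qed.

Lemma norm_sigmoid_le (a t : R) : t <= - a -> `|sigmoid t| <= expR (- a).
Proof.
move=> le_ta; have s_gt0 := sigmoid_gt0 t; have sK := sigmoidK t.
have eN_gt0 := expR_gt0 (- t); have e_gt0 := expR_gt0 t.
have eK : expR t * expR (- t) = 1 by rewrite -expRD subrr expR0.
have le_e : expR t <= expR (- a) by rewrite ler_expR.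
rewrite ger0_norm; nra.
Qed.

(* From [1 + c <= exp c] with [c = (M + 1) / eps]. *)
Lemma mul_expRN_lt (M eps : R) : 0 <= M -> 0 < eps ->
  M * expR (- ((M + 1) / eps)) < eps.
Proof.
move=> M_ge0 eps_gt0; set c := (M + 1) / eps.
have cE : c * eps = M + 1 by rewrite /c mulfVK // gt_eqF.
have e_gt0 := expR_gt0 (- c); have le1c := expR_ge1Dx c.
have eK : expR c * expR (- c) = 1 by rewrite -expRD subrr expR0.
have le_e1 : expR (- c) * (1 + c) <= 1 by nra.
nra.
Qed.

End Sigmoid.

Lemma telescope_step_sum (R : ringType) (f : nat -> R) (n j : nat) : (j < n)%N ->
  \sum_(k < n) (f k - (if (k.+1 < n)%N then f k.+1 else 0)) * (j <= k)%:R = f j.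
Proof.
move=> lt_jn; pose g k := if (k < n)%N then f k else 0.
rewrite -(big_mkord xpredT (fun k => (f k - (if (k.+1 < n)%N then f k.+1 else 0)) * (j <= k)%:R)).
rewrite (big_cat_nat (leq0n j) (ltnW lt_jn)) /= big_nat_cond big1 ?add0r; last first.
  by move=> i /andP[/andP[_ lt_ij] _]; rewrite (leqNgt j i) lt_ij mulr0.
rewrite (@eq_big_nat _ _ _ j n _ (fun k => - g k.+1 - - g k)); last first.
  by move=> i /andP[le_ji lt_in]; rewrite le_ji mulr1 /g lt_in opprK addrC.
by rewrite telescope_sumr ?(ltnW lt_jn) // /g ltnn lt_jn oppr0 opprK add0r.
Qed.

Section SortedDataset.
Variable R : realType.
Variables (dN a : R) (S : seq (R * R)).

Definition ge_input : rel (R * R) := fun p q => q.1 <= p.1.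

Definition node_x k := (nth (0, 0) S k).1.
Definition node_y k := (nth (0, 0) S k).2.

(* The last gap is the free parameter [dN], and [node_y (size S) = 0]. *)
Definition gap k := if (k.+1 < size S)%N then node_x k - node_x k.+1 else dN.
Definition jump k := node_y k - (if (k.+1 < size S)%N then node_y k.+1 else 0).

Definition preact (x : R) k := (2 * a / gap k) * x + (a - (2 * a / gap k) * node_x k).

Lemma TNN_nodesE (D : seq (R * R)) x : S = sort_dec D ->
  TNN dN a D x = \sum_(k < size S) jump k * sigmoid (preact x k).
Proof. by move=> SE; rewrite /TNN -SE. Qed.

Hypothesis S_sorted : sorted ge_input S.
Hypothesis S_uniq : uniq (map fst S).

Lemma node_x_le i k : (i <= k < size S)%N -> node_x k <= node_x i.
Proof.
move=> /andP[le_ik lt_kS].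
have ge_trans : transitive ge_input.
  by move=> y x z; rewrite /ge_input => le_yx le_zy; apply: le_trans le_zy le_yx.
have ge_refl : reflexive ge_input by move=> x; rewrite /ge_input.
apply: (sorted_leq_nth ge_trans ge_refl (0, 0) S_sorted) => //.
exact: leq_ltn_trans lt_kS.
Qed.

Lemma node_x_lt i k : (i < k < size S)%N -> node_x k < node_x i.
Proof.
move=> /andP[lt_ik lt_kS]; have lt_iS := ltn_trans lt_ik lt_kS.
rewrite lt_neqAle node_x_le ?(ltnW lt_ik) // andbT.
have := nth_uniq 0 (_ : (i < size (map fst S))%N) (_ : (k < size (map fst S))%N) S_uniq.
rewrite !size_map !(nth_map (0, 0)) // => /(_ lt_iS lt_kS) eq_ik.
by rewrite /node_x eq_sym eq_ik neq_ltn lt_ik.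
Qed.

Hypotheses (dN_gt0 : 0 < dN) (a_gt0 : 0 < a).

Lemma gap_gt0 k : (k < size S)%N -> 0 < gap k.
Proof.
by move=> lt_kS; rewrite /gap; case: ifP => // lt_k1S; rewrite subr_gt0 node_x_lt ?ltnSn.
Qed.

Lemma preact_nodeE j k :
  preact (node_x j) k = 2 * a / gap k * (node_x j - node_x k) + a.
Proof. by rewrite /preact; lra. Qed.

Lemma sigmoid_preact_step j k : (j < size S)%N -> (k < size S)%N ->
  `|(j <= k)%:R - sigmoid (preact (node_x j) k)| <= expR (- a).
Proof.
move=> lt_jS lt_kS; have W_gt0 : 0 < 2 * a / gap k.
  by rewrite divr_gt0 ?mulr_gt0 ?gap_gt0.
rewrite preact_nodeE; case: (leqP j k) => [le_jk | lt_kj].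
  rewrite mulr1n; apply: dist_sigmoid1_le; rewrite lerDr mulr_ge0 ?(ltW W_gt0) //.
  by rewrite subr_ge0 node_x_le ?le_jk.
rewrite mulr0n sub0r normrN; apply: norm_sigmoid_le.
have lt_k1S : (k.+1 < size S)%N by apply: leq_ltn_trans lt_jS.
have le_gap : node_x j - node_x k <= - gap k.
  by rewrite /gap lt_k1S; have := @node_x_le k.+1 j; rewrite lt_kj lt_jS; lra.
have := ler_wpM2l (ltW W_gt0) le_gap.
by rewrite mulrN divfK ?gt_eqF ?gap_gt0 //; lra.
Qed.

Lemma TNN_node_err j : (j < size S)%N ->
  `|node_y j - \sum_(k < size S) jump k * sigmoid (preact (node_x j) k)|
    <= (\sum_(k < size S) `|jump k|) * expR (- a).
Proof.
move=> lt_jS.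
rewrite -{1}(telescope_step_sum node_y lt_jS) -sumrB mulr_suml.
apply: le_trans (ler_norm_sum _ _ _) _; apply: ler_sum => k _.
by rewrite -mulrBr normrM ler_wpM2l // sigmoid_preact_step.
Qed.

End SortedDataset.

Theorem proposition2 (R : realType) (D D' : seq (R * R)) (eps dN : R) :
  all (fun p : R * R => (0 <= p.1) && (p.1 <= 1)) (D ++ D') ->
  uniq (map fst (D ++ D')) ->
  0 < eps -> 0 < dN ->
  exists A : seq (R * R), exists a : R,
    subseq A D' /\ 0 < a /\
    forall p, p \in D ++ D' -> `| p.2 - TNN dN a (D ++ A) p.1 | < eps.
Proof.
move=> _ uniqDD' eps_gt0 dN_gt0; set S := sort_dec (D ++ D').
set M := \sum_(k < size S) `|jump S k|.
have M_ge0 : 0 <= M by apply: sumr_ge0.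
have a_gt0 : 0 < (M + 1) / eps by rewrite divr_gt0 // ltr_pwDr.
exists D', ((M + 1) / eps); split; first exact: subseq_refl.
split=> // p pDD'.
have S_sorted : sorted (@ge_input R) S by apply: sort_sorted => x y; apply: le_total.
have S_uniq : uniq (map fst S) by rewrite (perm_uniq (perm_map fst (permEl (perm_sort _ _)))).
have jS : (index p S < size S)%N by rewrite index_mem mem_sort.
have pE : p = nth (0, 0) S (index p S) by rewrite nth_index ?mem_sort.
rewrite (TNN_nodesE dN _ _ (erefl S)) {1 2}pE.
apply: le_lt_trans (TNN_node_err S_sorted S_uniq dN_gt0 a_gt0 jS) _.
exact: mul_expRN_lt.
Qed.
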